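(* Assume source and target traces are related via ${\sim}=\langle \overset{\circ}{\sim},\overset{\bullet}{\sim}\rangle$, i.e. $s\sim t\iff s^\circ\overset{\circ}{\sim}t^\circ \wedge s^\bullet\overset{\bullet}{\sim}t^\bullet$, where $\overset{\bullet}{\sim}$ is a total and surjective map from source output projections to target output projections. Let $\phi_T\in\mathit{uco}(2^{\mathit{Trace}_T^\circ})$ and $\rho_T\in\mathit{uco}(2^{\mathit{Trace}_T^\bullet})$, and assume that for all $s,t$, $s^\circ\overset{\circ}{\sim}t^\circ$ implies $\phi_T(t^\circ)=\phi_T(\tilde\tau^\circ(s^\circ))$. If the compilation chain satisfies $\mathit{CC}^{\sim}$ and a source program $W$ satisfies $\mathit{ANI}[\phi_S^\#,\rho_S^\#]$, then $W{\downarrow}$ satisfies $\mathit{ANI}[\phi_T,\rho_T]$, where $\phi_S^\#=\tilde\sigma^\circ\circ\phi_T\circ\tilde\tau^\circ$ and $\rho_S^\#=\tilde\sigma^\bullet\circ\rho_T\circ\tilde\tau^\bullet$.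
   Context: A compilation chain consists of source (whole) programs $W$, target programs, sets $\mathit{Trace}_S,\mathit{Trace}_T$ of source and target traces, semantics relations $W\rightsquigarrow t$ at both levels, and a compiler $W\mapsto W{\downarrow}$; $\mathit{beh}(W)=\{t\mid W\rightsquigarrow t\}$, and $W$ satisfies a hyperproperty $H$ iff $\mathit{beh}(W)\in H$. $\mathit{CC}^{\sim}$ states: for every $W$ and $t$, if $W{\downarrow}\rightsquigarrow t$ then there is $s\sim t$ with $W\rightsquigarrow s$. Each trace $t$ has a disjoint input projection $t^\circ$ and output projection $t^\bullet$; $\mathit{Trace}^\circ,\mathit{Trace}^\bullet$ are the sets of input and output projections. ''Total and surjective map from source to target'' means each source output projection is related to exactly one target output projection and every target output projection is related to some source one. $\tilde\tau^\circ,\tilde\sigma^\circ$ are the existential and universal images of $\overset{\circ}{\sim}$: $\tilde\tau^\circ(\pi)=\{t^\circ\mid\exists s^\circ\in\pi.\ s^\circ\overset{\circ}{\sim}t^\circ\}$, $\tilde\sigma^\circ(\pi)=\{s^\circ\mid\forall t^\circ.\ s^\circ\overset{\circ}{\sim}t^\circ\Rightarrow t^\circ\in\pi\}$; $\tilde\tau^\bullet,\tilde\sigma^\bullet$ are defined analogously from $\overset{\bullet}{\sim}$. A single element $x$ as argument abbreviates $\{x\}$. An upper closure operator ($\mathit{uco}$) on a powerset is a monotone, idempotent, extensive map. $\mathit{ANI}[\phi,\rho]=\{\pi\mid\forall t_1,t_2\in\pi.\ \phi(t_1^\circ)=\phi(t_2^\circ)\Rightarrow\rho(t_1^\bullet)=\rho(t_2^\bullet)\}$.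 *)

(* sets are predicates, equality of sets is Leibniz equality
   (propositional/functional extensionality are available for proofs). *)
Set Implicit Arguments.

Definition set (X : Type) := X -> Prop.

(* A single element as argument abbreviates the singleton. *)
Definition single {X : Type} (x : X) : set X := fun y => y = x.

Definition subset {X : Type} (A B : set X) : Prop := forall x, A x -> B x.

Definition uco {X : Type} (f : set X -> set X) : Prop :=
  (forall A B, subset A B -> subset (f A) (f B)) /\
  (forall A, f (f A) = f A) /\
  (forall A, subset A (f A)).

Definition tau_img {S T : Type} (r : S -> T -> Prop) (pi : set S) : set T :=
  fun t => exists s, pi s /\ r s t.

Definition sigma_img {S T : Type} (r : S -> T -> Prop) (pi : set T) : set S :=
  fun s => forall t, r s t -> pi t.

Definition fcomp {A B C : Type} (g : B -> C) (f : A -> B) : A -> C :=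
  fun x => g (f x).

Definition trace_rel {TS TT IS IT OS OT : Type}
  (inS : TS -> IS) (outS : TS -> OS) (inT : TT -> IT) (outT : TT -> OT)
  (relI : IS -> IT -> Prop) (relO : OS -> OT -> Prop) (s : TS) (t : TT) : Prop :=
  relI (inS s) (inT t) /\ relO (outS s) (outT t).

Definition ANI {T I O : Type} (inp : T -> I) (out : T -> O)
  (phi : set I -> set I) (rho : set O -> set O) (pi : set T) : Prop :=
  forall t1 t2, pi t1 -> pi t2 ->
    phi (single (inp t1)) = phi (single (inp t2)) ->
    rho (single (out t1)) = rho (single (out t2)).

Definition surjective {A B : Type} (f : A -> B) : Prop := forall b, exists a, f a = b.

Definition total_surj_map {A B : Type} (r : A -> B -> Prop) : Prop :=
  (forall a, exists b, r a b /\ forall b', r a b' -> b' = b) /\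
  (forall b, exists a, r a b).

Definition CC {PS PT TS TT : Type} (semS : PS -> TS -> Prop) (semT : PT -> TT -> Prop)
  (comp : PS -> PT) (sim : TS -> TT -> Prop) : Prop :=
  forall W t, semT (comp W) t -> exists s, sim s t /\ semS W s.

Definition beh {P T : Type} (sem : P -> T -> Prop) (W : P) : set T := fun t => sem W t.

(* Given s1 ~ t1 and s2 ~ t2 from CC, the compatibility hypothesis turns
   phi_S#(s_i) into the universal image of phi_T(t_i), so the source ANI fires.
   Because the output relation is a function, the existential image of the
   output of s_i is exactly the output of t_i, and because that function is
   surjective, its universal image (a preimage) is injective; this recovers
   rho_T(t1) = rho_T(t2) from rho_S#(s1) = rho_S#(s2). *)

From Stdlib Require Import FunctionalExtensionality PropExtensionality.

Lemma set_ext {X : Type} (A B : set X) : (forall x, A x <-> B x) -> A = B.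
Proof.
  intro HAB. apply functional_extensionality; intro x.
  apply propositional_extensionality, HAB.
Qed.

Definition functional {A B : Type} (r : A -> B -> Prop) : Prop :=
  forall a b b', r a b -> r a b' -> b = b'.

Lemma total_surj_map_functional {A B : Type} {r : A -> B -> Prop} :
  total_surj_map r -> functional r.
Proof.
  intros [Htot _] a b b' Hb Hb'.
  destruct (Htot a) as [c [_ Hc]].
  rewrite (Hc _ Hb), (Hc _ Hb'). reflexivity.
Qed.

Lemma tau_img_single {A B : Type} {r : A -> B -> Prop} {a : A} {b : B} :
  functional r -> r a b -> tau_img r (single a) = single b.
Proof.
  intros Hfun Hab. apply set_ext; intro b'. split.
  - intros [a' [Ha' Hab']]. unfold single in *. subst a'.
    exact (Hfun _ _ _ Hab' Hab).
  - intro Hb'. unfold single in Hb'. subst b'. exists a. split; [reflexivity | exact Hab].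
Qed.

Lemma sigma_img_inj {A B : Type} {r : A -> B -> Prop} {P Q : set B} :
  functional r -> (forall b, exists a, r a b) ->
  sigma_img r P = sigma_img r Q -> P = Q.
Proof.
  intros Hfun Hsurj HPQ. apply set_ext; intro b.
  destruct (Hsurj b) as [a Hab].
  assert (Hsigma : forall R : set B, sigma_img r R a <-> R b).
  { intro R. split.
    - intro HR. exact (HR b Hab).
    - intros HR b' Hab'. rewrite (Hfun _ _ _ Hab' Hab). exact HR. }
  rewrite <- (Hsigma P), <- (Hsigma Q), HPQ. reflexivity.
Qed.

Theorem theorem4p3
  (PS PT TS TT IS IT OS OT : Type)
  (semS : PS -> TS -> Prop) (semT : PT -> TT -> Prop) (comp : PS -> PT)
  (inS : TS -> IS) (outS : TS -> OS) (inT : TT -> IT) (outT : TT -> OT)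
  (HinS : surjective inS) (HoutS : surjective outS)
  (HinT : surjective inT) (HoutT : surjective outT)
  (relI : IS -> IT -> Prop) (relO : OS -> OT -> Prop)
  (HrelO : total_surj_map relO)
  (phiT : set IT -> set IT) (rhoT : set OT -> set OT)
  (Hphi : uco phiT) (Hrho : uco rhoT)
  (Hcompat : forall (s : TS) (t : TT), relI (inS s) (inT t) ->
       phiT (single (inT t)) = phiT (tau_img relI (single (inS s))))
  (HCC : CC semS semT comp (trace_rel inS outS inT outT relI relO))
  (W : PS)
  (HW : ANI inS outS
          (fcomp (sigma_img relI) (fcomp phiT (tau_img relI)))
          (fcomp (sigma_img relO) (fcomp rhoT (tau_img relO)))
          (beh semS W)) :
  ANI inT outT phiT rhoT (beh semT (comp W)).
Proof.
  intros t1 t2 Ht1 Ht2 Hphi12.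
  destruct (HCC W t1 Ht1) as [s1 [[HI1 HO1] Hs1]].
  destruct (HCC W t2 Ht2) as [s2 [[HI2 HO2] Hs2]].
  assert (HrelO_fun := total_surj_map_functional HrelO).
  assert (Hrho12 := HW s1 s2 Hs1 Hs2). unfold fcomp in Hrho12.
  rewrite <- (Hcompat _ _ HI1), <- (Hcompat _ _ HI2), Hphi12 in Hrho12.
  specialize (Hrho12 eq_refl).
  rewrite (tau_img_single HrelO_fun HO1), (tau_img_single HrelO_fun HO2) in Hrho12.
  exact (sigma_img_inj HrelO_fun (proj2 HrelO) Hrho12).
Qed.
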